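(* Suppose $pn\to\infty$ and $q\ln n\to\infty$ as $n\to\infty$, where $q=1-p$. Then for every $\varepsilon>0$ there exists $n_0$ such that for all $n\ge n_0$, $$u_2(n,p)\le(2+\varepsilon)\log_{\frac{1}{1-p}}(np)\quad\text{and}\quad u_2'(n,p)\le(2+\varepsilon)\log_{\frac{1}{1-p}}(np).$$
   Context: $G(n,p)$ is the Erdős–Rényi random graph on $n$ labelled vertices (vertex set $V$), each edge present independently with probability $p=p(n)$; $\mathbb{P}_{n,p}$ is the corresponding probability and $q=1-p$. A diameter graph in $\mathbb{R}^d$ is a graph $(V,E)$ with $V\subset\mathbb{R}^d$ finite and $E=\{\{\mathbf{x},\mathbf{y}\}\subseteq V: |\mathbf{x}-\mathbf{y}|=\operatorname{diam}V\}$, where $\operatorname{diam}V=\max_{\mathbf{x},\mathbf{y}\in V}|\mathbf{x}-\mathbf{y}|$ (Euclidean norm); a graph is a diameter graph in $\mathbb{R}^d$ if it is isomorphic to one. $u_d(n,p)$ is the largest positive integer $k$ such that $\mathbb{P}_{n,p}\big(\exists W\subseteq V,\ |W|=k,\ G[W]$ is a diameter graph in $\mathbb{R}^d$ and $\chi(G[W])=d+1\big)>\frac12$, where $G[W]$ is the induced subgraph; if no such $k$ exists, $u_d(n,p)=0$. $u_d'(n,p)$ is defined identically with the additional requirement that $G[W]$ be connected. *)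

From Stdlib Require Import Reals ClassicalEpsilon.
From mathcomp Require Import all_boot.


Definition Rsum {T : Type} (s : seq T) (f : T -> R) : R :=
  foldr (fun x a => Rplus (f x) a) R0 s.
Definition Rprod {T : Type} (s : seq T) (f : T -> R) : R :=
  foldr (fun x a => Rmult (f x) a) R1 s.

(* Unordered pairs {i,j} of distinct vertices of V = 'I_n, encoded as i < j. *)
Definition pairT (n : nat) := {x : 'I_n * 'I_n | (x.1 < x.2)%N}.

Definition graphT (n : nat) := {ffun pairT n -> bool}.

Definition adj (n : nat) (g : graphT n) : rel 'I_n := fun i j =>
  match (insub (i, j) : option (pairT n)) with
  | Some e => g e
  | None => match (insub (j, i) : option (pairT n)) with
            | Some e => g e
            | None => false
            end
  end.

Definition weight (n : nat) (p : R) (g : graphT n) : R :=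
  Rprod (enum {: pairT n}) (fun e => if g e then p else Rminus R1 p).

Definition prob (n : nat) (p : R) (A : graphT n -> Prop) : R :=
  Rsum (enum {: graphT n})
    (fun g => if excluded_middle_informative (A g) then weight n p g else R0).

Definition edist (d : nat) (x y : 'I_d -> R) : R :=
  sqrt (Rsum (enum {: 'I_d}) (fun i => pow (Rminus (x i) (y i)) 2)).

(* The induced subgraph E[W] is isomorphic to a diameter graph in R^d:
   an injective placement f of W in R^d, D = diam f(W), and for distinct
   x, y in W:  x ~ y  iff  |f x - f y| = D. *)
Definition is_diameter_graph (d n : nat) (E : rel 'I_n) (W : {set 'I_n}) : Prop :=
  exists f : 'I_n -> ('I_d -> R),
    {in W &, injective f} /\
    exists D : R,
      (forall x y, x \in W -> y \in W -> Rle (edist d (f x) (f y)) D) /\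
      (exists x y, x \in W /\ y \in W /\ edist d (f x) (f y) = D) /\
      (forall x y, x \in W -> y \in W -> x <> y ->
         (E x y <-> edist d (f x) (f y) = D)).

Definition colorable (n : nat) (E : rel 'I_n) (W : {set 'I_n}) (k : nat) : Prop :=
  exists c : 'I_n -> nat,
    (forall x, x \in W -> (c x < k)%N) /\
    (forall x y, x \in W -> y \in W -> E x y -> c x <> c y).

Definition chromatic_number_is (n : nat) (E : rel 'I_n) (W : {set 'I_n}) (k : nat) : Prop :=
  colorable n E W k /\ (forall j, colorable n E W j -> (k <= j)%N).

Definition connected_on (n : nat) (E : rel 'I_n) (W : {set 'I_n}) : Prop :=
  forall x y, x \in W -> y \in W ->
    connect (fun a b => [&& a \in W, b \in W & E a b]) x y.

Definition event (d n k : nat) (conn : bool) (g : graphT n) : Prop :=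
  exists W : {set 'I_n}, #|W| = k /\
    is_diameter_graph d n (adj n g) W /\
    chromatic_number_is n (adj n g) W d.+1 /\
    (conn -> connected_on n (adj n g) W).

Definition good (d n : nat) (p : R) (conn : bool) (k : nat) : bool :=
  if Rlt_dec (Rinv 2) (prob n p (event d n k conn)) then true else false.

(* Largest k (k <= n, since no k-subset exists for k > n) with probability
   > 1/2; 0 if there is none. *)
Definition u_gen (d n : nat) (p : R) (conn : bool) : nat :=
  \max_(k < n.+1 | good d n p conn k) k.

Definition u (d n : nat) (p : R) : nat := u_gen d n p false.
Definition u' (d n : nat) (p : R) : nat := u_gen d n p true.

From Stdlib Require Import Reals Lra Lia Psatz ClassicalEpsilon FunctionalExtensionality.
From HB Require Import structures.
From mathcomp Require Import all_boot zify.

Set Implicit Arguments. Unset Strict Implicit. Unset Printing Implicit Defensive.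

(* A diameter graph in the plane on k vertices has at most k edges: if a vertex v
   has three neighbours, all at distance D from v and pairwise within D, the middle
   one is adjacent to v only; so a graph of minimum degree 2 has maximum degree 2,
   and otherwise one peels off a vertex of degree at most 1.  The event therefore
   forces a k-set W spanning at most k of its C(k,2) pairs, and for t in (0,1]
   Markov's inequality applied to the sum over k-sets of t^(e(W) - k) bounds its
   probability by C(n,k) (p t + q)^C(k,2) / t^k.  With t = 2q / ((k-1) p) this is
   at most exp (k (ln (np) - ln 2 + (k-3)/2 ln q + 2)), which is below 1/2 once
   k > (2 + eps) log_{1/q} (np) and np, q ln n are large. *)

Lemma sum_pairT n (F : 'I_n -> 'I_n -> nat) :
  \sum_(e : pairT n) F (val e).1 (val e).2 =
  \sum_(a < n) \sum_(b < n) (if a < b then F a b else 0).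
Proof.
rewrite pair_big /= (bigID (fun x : 'I_n * 'I_n => x.1 < x.2)) /=.
rewrite [X in _ + X]big1 ?addn0; last by move=> [a b] /negbTE /= ->.
rewrite (reindex_omap (val : pairT n -> 'I_n * 'I_n) insub); last first.
  by move=> x Px; rewrite insubT.
apply: eq_big => [e|e _]; last by case: e => [[a b] /= ->].
by case: e => [[a b] ab] /=; rewrite ab insubT /= eqxx.
Qed.

Lemma sum_pairT_sym n (F : 'I_n -> 'I_n -> nat) : (forall a b, F a b = F b a) ->
  2 * \sum_(e : pairT n) F (val e).1 (val e).2 + \sum_(a < n) F a a =
  \sum_(a < n) \sum_(b < n) F a b.
Proof.
move=> Fsym; rewrite sum_pairT mul2n -addnn.
have transpose : \sum_(a < n) \sum_(b < n) (if a < b then F a b else 0)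
               = \sum_(a < n) \sum_(b < n) (if b < a then F a b else 0).
  by rewrite exchange_big /=; apply: eq_bigr => a _; apply: eq_bigr => b _; rewrite Fsym.
rewrite {2}transpose -!big_split /=; apply: eq_bigr => a _.
rewrite -big_split /= [in RHS](bigD1 a) //= [in LHS](bigD1 a) //= ltnn add0n addnC.
congr (_ + _); apply: eq_bigr => b /negbTE ba.
case: ltngtP => [_|_|eq_ab]; rewrite ?addn0 ?add0n //.
by rewrite (val_inj eq_ab) eqxx in ba.
Qed.

Lemma twice_bin2 m : 2 * 'C(m, 2) + m = m * m.
Proof. by elim: m => [|m IH] //; rewrite binS bin1; nia. Qed.

Definition pairs_in n (W : {set 'I_n}) : {set pairT n} :=
  [set e | ((val e).1 \in W) && ((val e).2 \in W)].

Lemma card_pairs_in n (W : {set 'I_n}) : #|pairs_in W| = 'C(#|W|, 2).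
Proof.
suff : 2 * #|pairs_in W| + #|W| = #|W| * #|W| by have := twice_bin2 #|W|; lia.
have cardW : #|W| = \sum_(a < n) ((a \in W) && (a \in W)).
  by rewrite -sum1_card big_mkcond; apply: eq_bigr => a _; rewrite andbb; case: (a \in W).
have -> : #|pairs_in W| = \sum_(e : pairT n) ((val e).1 \in W) && ((val e).2 \in W).
  by rewrite -sum1_card big_mkcond; apply: eq_bigr => e _; rewrite inE; case: (_ && _).
rewrite {1}cardW (@sum_pairT_sym n (fun a b => (a \in W) && (b \in W))); last first.
  by move=> a b; rewrite andbC.
rewrite cardW big_distrl /=; apply: eq_bigr => a _.
by rewrite big_distrr /=; apply: eq_bigr => b _; case: (a \in W); case: (b \in W).
Qed.

Section DegreeSum.
Variables (T : finType) (E : rel T).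
Hypotheses (Esym : symmetric E) (Eirr : irreflexive E).

Definition deg (W : {set T}) v := \sum_(w in W) E v w.
Definition degsum (W : {set T}) := \sum_(v in W) deg W v.

Lemma deg_card (W : {set T}) v : deg W v = #|[set w in W | E v w]|.
Proof.
rewrite -sum1_card /deg big_mkcond [in RHS]big_mkcond /=; apply: eq_bigr => w _.
by rewrite inE; case: (w \in W); case: (E v w).
Qed.

Lemma deg_setD1 (W : {set T}) v u : v \in W -> deg W u = E u v + deg (W :\ v) u.
Proof. by move=> vW; rewrite /deg (big_setD1 _ vW). Qed.

Lemma degsum_setD1 (W : {set T}) v : v \in W -> degsum W = degsum (W :\ v) + 2 * deg W v.
Proof.
move=> vW; rewrite {1}/degsum (big_setD1 _ vW) /=.
under eq_bigr => u _ do rewrite (deg_setD1 u vW).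
rewrite big_split /=.
have -> : \sum_(u in W :\ v) E u v = deg W v.
  by rewrite /deg (big_setD1 _ vW) /= Eirr; apply: eq_bigr => u _; rewrite Esym.
rewrite -/(degsum _); lia.
Qed.

Definition leaf_in_neighbour_triples (W0 : {set T}) : Prop :=
  forall v a b c, [/\ v \in W0, a \in W0, b \in W0 & c \in W0] ->
    [/\ a != b, b != c & c != a] -> [&& E v a, E v b & E v c] ->
  exists2 x, x \in [:: a; b; c] & forall w, w \in W0 -> E x w -> w = v.

Variable W0 : {set T}.
Hypothesis leafW0 : leaf_in_neighbour_triples W0.

Lemma deg_le2 (W : {set T}) v : W \subset W0 -> v \in W ->
  (forall u, u \in W -> 1 < deg W u) -> deg W v <= 2.
Proof.
move=> /subsetP sW vW mindeg; rewrite leqNgt deg_card; apply/card_gt2P.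
case=> a [b [c [[aN bN cN] dist]]]; move: aN bN cN; rewrite !inE.
case/andP=> aW Ea /andP[bW Eb] /andP[cW Ec].
have [x xabc leaf_x] := leafW0 (And4 (sW _ vW) (sW _ aW) (sW _ bW) (sW _ cW)) dist
  (introT and3P (And3 Ea Eb Ec)).
have xW : x \in W by move: xabc; rewrite !inE => /or3P[] /eqP->.
suff : deg W x <= 1 by have := mindeg x xW; lia.
rewrite (deg_setD1 x vW) /deg big1 ?addn0 ?leq_b1 // => w /setD1P[wv wW].
case Exw: (E x w) => //.
by rewrite (leaf_x w (sW _ wW) Exw) eqxx in wv.
Qed.

Lemma degsum_le (W : {set T}) : W \subset W0 -> degsum W <= 2 * #|W|.
Proof.
move: {2}#|W| (leqnn #|W|) => m; elim: m W => [|m IH] W cardW sW.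
  by rewrite (cards0_eq (_ : #|W| = 0)) ?/degsum ?big_set0 //; lia.
have [v /andP[vW dv]|no_leaf] := pickP [pred v in W | deg W v <= 1].
  have cardWv : #|W| = (#|W :\ v|).+1 by rewrite (cardsD1 v W) vW.
  have := IH (W :\ v) ltac:(lia) (subset_trans (subsetDl W [set v]) sW).
  by rewrite (degsum_setD1 vW) cardWv; lia.
have mindeg u : u \in W -> 1 < deg W u.
  by move=> uW; rewrite ltnNge; apply/negbT; have := no_leaf u; rewrite /= uW.
rewrite /degsum -sum1_card big_distrr /=; apply: leq_sum => v vW.
by rewrite muln1 deg_le2.
Qed.

End DegreeSum.

Lemma adj_irr n (g : graphT n) : irreflexive (adj n g).
Proof. by move=> i; rewrite /adj !insubF //= ltnn. Qed.

Lemma adj_pair n (g : graphT n) (e : pairT n) : adj n g (val e).1 (val e).2 = g e.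
Proof.
rewrite /adj; case: insubP => [e' _ e'E|]; last by case: e => [[i j] ij] /=; rewrite ij.
by congr (g _); apply: val_inj; rewrite e'E; case: (val e).
Qed.

Lemma adj_sym n (g : graphT n) : symmetric (adj n g).
Proof.
suff adj_gt (i j : 'I_n) : j < i -> adj n g i j = adj n g j i.
  by move=> i j; case: (ltngtP i j) => [/adj_gt|/adj_gt|/val_inj ->].
move=> ji; rewrite {1}/adj insubF /=; last by rewrite ltnNge ltnW.
by rewrite insubT /= -(adj_pair g (exist _ (j, i) ji)).
Qed.

Definition edges_in n (g : graphT n) (W : {set 'I_n}) : {set pairT n} :=
  [set e in pairs_in W | g e].

Lemma degsum_adj n (g : graphT n) (W : {set 'I_n}) :
  degsum (adj n g) W = 2 * #|edges_in g W|.
Proof.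
pose F a b := (a \in W) && (b \in W) && adj n g a b.
have -> : #|edges_in g W| = \sum_(e : pairT n) F (val e).1 (val e).2.
  rewrite -sum1_card big_mkcond; apply: eq_bigr => e _.
  by rewrite !inE /F adj_pair; case: (_ && g e).
have -> : degsum (adj n g) W = \sum_(a < n) \sum_(b < n) F a b.
  rewrite /degsum big_mkcond /=; apply: eq_bigr => a _.
  rewrite /deg big_mkcond /= /F; case: (a \in W) => /=; last by rewrite big1.
  by apply: eq_bigr => b _; case: (b \in W).
rewrite -(@sum_pairT_sym n F); last first.
  by move=> a b; rewrite /F adj_sym; case: (a \in W); case: (b \in W).
by rewrite [X in _ + X]big1 ?addn0 // => a _; rewrite /F adj_irr andbF.
Qed.

Local Open Scope R_scope.

HB.instance Definition _ := Monoid.isComLaw.Build R R0 Rplus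
  (fun a b c => esym (Rplus_assoc a b c)) Rplus_comm Rplus_0_l.
HB.instance Definition _ := Monoid.isComLaw.Build R R1 Rmult
  (fun a b c => esym (Rmult_assoc a b c)) Rmult_comm Rmult_1_l.
HB.instance Definition _ := Monoid.isMulLaw.Build R R0 Rmult Rmult_0_l Rmult_0_r.
HB.instance Definition _ := Monoid.isAddLaw.Build R Rmult Rplus
  Rmult_plus_distr_r Rmult_plus_distr_l.

Lemma RsumE (T : Type) (s : seq T) f : Rsum s f = \big[Rplus/R0]_(x <- s) f x.
Proof. by elim: s => [|x s IH]; rewrite ?big_nil ?big_cons //= IH. Qed.

Lemma RprodE (T : Type) (s : seq T) f : Rprod s f = \big[Rmult/R1]_(x <- s) f x.
Proof. by elim: s => [|x s IH]; rewrite ?big_nil ?big_cons //= IH. Qed.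

Lemma Rle_sum (I : Type) (r : seq I) (P : pred I) (F G : I -> R) :
  (forall i, P i -> F i <= G i) ->
  \big[Rplus/R0]_(i <- r | P i) F i <= \big[Rplus/R0]_(i <- r | P i) G i.
Proof. by move=> FG; apply: (big_ind2 Rle) => // *; lra. Qed.

Lemma Rsum_ge0 (I : Type) (r : seq I) (P : pred I) (F : I -> R) :
  (forall i, P i -> 0 <= F i) -> 0 <= \big[Rplus/R0]_(i <- r | P i) F i.
Proof. by move=> F0; apply: (big_ind (Rle 0)) => // *; lra. Qed.

Lemma Rprod_ge0 (I : Type) (r : seq I) (P : pred I) (F : I -> R) :
  (forall i, P i -> 0 <= F i) -> 0 <= \big[Rmult/R1]_(i <- r | P i) F i.
Proof. by move=> F0; apply: (big_ind (Rle 0)) => // *; nra. Qed.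

Lemma Rsum_const (I : finType) (A : {pred I}) c :
  \big[Rplus/R0]_(i in A) c = INR #|A| * c.
Proof.
rewrite big_const; elim: #|A| => [|m IH] /=; first lra.
by rewrite IH -/(INR m.+1) S_INR; lra.
Qed.

Lemma Rprod_const (I : finType) (A : {pred I}) c :
  \big[Rmult/R1]_(i in A) c = c ^ #|A|.
Proof. by rewrite big_const; elim: #|A| => [|m IH] //=; rewrite IH. Qed.

Lemma INR_muln (a b : nat) : INR (a * b) = INR a * INR b.
Proof. by rewrite -multE mult_INR. Qed.

Lemma INR_expn (a k : nat) : INR (a ^ k) = INR a ^ k.
Proof. by elim: k => [|k IH] //; rewrite expnS INR_muln IH. Qed.

Lemma ln_le_compat x y : 0 < x -> x <= y -> ln x <= ln y.
Proof.
by move=> x0 /Rle_lt_or_eq_dec [/(ln_increasing _ _ x0) /Rlt_le|->] //; apply: Rle_refl.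
Qed.

Lemma exp_le_compat x y : x <= y -> exp x <= exp y.
Proof. by move=> /Rle_lt_or_eq_dec [/exp_increasing /Rlt_le|->] //; apply: Rle_refl. Qed.

Lemma ln_le_sub1 x : 0 < x -> ln x <= x - 1.
Proof. by move=> x0; have := exp_ineq1_le (ln x); rewrite exp_ln //; lra. Qed.

Lemma ln_inv_gt0 q : 0 < q < 1 -> 0 < ln (1 / q).
Proof.
move=> q01; rewrite -ln_1; apply: ln_increasing; first lra.
by apply: (Rmult_lt_reg_r q); rewrite /Rdiv ?Rmult_1_l ?Rinv_l; lra.
Qed.

Lemma pow_exp_ln x m : 0 < x -> x ^ m = exp (INR m * ln x).
Proof. by move=> x0; rewrite -ln_pow // exp_ln //; apply: pow_lt. Qed.

Lemma pow_le_exp (y : R) (m : nat) : 0 <= y -> (1 + y) ^ m <= exp (y * INR m).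
Proof.
move=> y0; elim: m => [|m IH]; first by rewrite /= Rmult_0_r exp_0; lra.
rewrite S_INR /= Rmult_plus_distr_l Rmult_1_r exp_plus Rmult_comm.
apply: Rmult_le_compat => //; [apply: pow_le; lra | lra | exact: exp_ineq1_le].
Qed.

Lemma pow_le1_decr (t : R) (m k : nat) : 0 <= t <= 1 -> (m <= k)%N -> t ^ k <= t ^ m.
Proof.
move=> t01 /subnK <-; rewrite pow_add -[X in _ <= X]Rmult_1_l.
apply: Rmult_le_compat_r; first by apply: pow_le; lra.
by rewrite -(pow1 (k - m)); apply: pow_incr; lra.
Qed.

(** * Diameter graphs in the plane *)

(* b = (al a + ga c) / s with s = - be lies in the cone spanned by a and c. *)
Lemma cone_middle_dist_lt (a0 a1 b0 b1 c0 c1 al be ga w0 w1 D2 : R) :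
  a0^2 + a1^2 = D2 -> b0^2 + b1^2 = D2 -> c0^2 + c1^2 = D2 -> a0*c0 + a1*c1 < D2 ->
  al*a0 + be*b0 + ga*c0 = 0 -> al*a1 + be*b1 + ga*c1 = 0 ->
  0 < al -> 0 < ga -> be < 0 ->
  0 < w0^2 + w1^2 -> (w0-a0)^2 + (w1-a1)^2 <= D2 -> (w0-c0)^2 + (w1-c1)^2 <= D2 ->
  (w0-b0)^2 + (w1-b1)^2 < D2.
Proof.
move=> Ha Hb Hc Hac E0 E1 al0 ga0 be0 w_gt0 Hwa Hwc; apply: Rnot_le_lt => Hwb.
set s := - be.
have sb0 : s * b0 = al*a0 + ga*c0 by rewrite /s; lra.
have sb1 : s * b1 = al*a1 + ga*c1 by rewrite /s; lra.
have D2_gt0 : 0 < D2.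
  by have := pow2_ge_0 (a0 + c0); have := pow2_ge_0 (a1 + c1); nra.
have wa : w0^2 + w1^2 <= 2*(w0*a0 + w1*a1) by nra.
have wc : w0^2 + w1^2 <= 2*(w0*c0 + w1*c1) by nra.
have wb : 2*(w0*b0 + w1*b1) <= w0^2 + w1^2 by nra.
have wsb : s * (2*(w0*b0 + w1*b1)) = 2*al*(w0*a0 + w1*a1) + 2*ga*(w0*c0 + w1*c1).
  have -> : s * (2*(w0*b0 + w1*b1)) = 2*(w0*(s*b0) + w1*(s*b1)) by ring.
  by rewrite sb0 sb1; ring.
(* Pairing with w gives al + ga <= s ... *)
have sum_le : al + ga <= s.
  apply: (Rmult_le_reg_r (w0^2 + w1^2)) => //; rewrite /s in wsb |- *; nra.
(* ... while |s b| = |al a + ga c| < (al + ga) D because a <> c. *)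
have sb_norm : s^2 * D2 = al^2 * D2 + ga^2 * D2 + 2*al*ga*(a0*c0 + a1*c1).
  rewrite -{1}Hb; have -> : s^2 * (b0^2 + b1^2) = (s*b0)^2 + (s*b1)^2 by ring.
  by rewrite sb0 sb1 -{1}Ha -{1}Hc; ring.
have : al^2 * D2 + ga^2 * D2 + 2*al*ga*(a0*c0 + a1*c1) < (al + ga)^2 * D2.
  have : 0 < al * ga by nra.
  nra.
have : (al + ga)^2 * D2 <= s^2 * D2 by apply: Rmult_le_compat_r; nra.
lra.
Qed.

Lemma cross_neq0 (p0 p1 q0 q1 D2 : R) :
  p0^2 + p1^2 = D2 -> q0^2 + q1^2 = D2 -> - D2 < p0*q0 + p1*q1 < D2 ->
  p0*q1 - p1*q0 <> 0.
Proof.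
move=> Hp Hq Hpq cross0.
have lagrange : (p0*q0 + p1*q1)^2 + (p0*q1 - p1*q0)^2 = (p0^2 + p1^2) * (q0^2 + q1^2).
  by ring.
rewrite Hp Hq cross0 in lagrange; nra.
Qed.

Lemma sign_odd_one_out (al be ga x y z : R) :
  al <> 0 -> be <> 0 -> ga <> 0 -> 0 < x -> 0 < y -> 0 < z ->
  al * x + be * y + ga * z = 0 ->
  [\/ al * be < 0 /\ ga * be < 0, be * al < 0 /\ ga * al < 0 | al * ga < 0 /\ be * ga < 0].
Proof.
move=> al0 be0 ga0 x0 y0 z0 E.
have sgn r : r <> 0 -> 0 < r \/ r < 0 by move=> r0; lra.
case: (sgn _ al0) => ? ; case: (sgn _ be0) => ?; case: (sgn _ ga0) => ?;
  first [nra | by constructor 1; split; nra | by constructor 2; split; nra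
             | by constructor 3; split; nra].
Qed.

Section PlaneDiameterGraph.
Variables (T : finType) (E : rel T) (W : {set T}) (X Y : T -> R) (D2 : R).

Let dist2 x y := (X x - X y)^2 + (Y x - Y y)^2.

Hypothesis dist2_le : forall x y, x \in W -> y \in W -> dist2 x y <= D2.
Hypothesis dist2_gt0 : forall x y, x \in W -> y \in W -> x != y -> 0 < dist2 x y.
Hypothesis dist2_edge : forall x y, x \in W -> y \in W -> E x y -> dist2 x y = D2.

Lemma middle_neighbour_leaf v p q r w al be ga :
  [/\ v \in W, p \in W, q \in W, r \in W & w \in W] -> p != r ->
  [&& E v p, E v q, E v r & E q w] ->
  al * (X p - X v) + be * (X q - X v) + ga * (X r - X v) = 0 ->
  al * (Y p - Y v) + be * (Y q - Y v) + ga * (Y r - Y v) = 0 ->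
  al * be < 0 -> ga * be < 0 -> w = v.
Proof.
move=> [vW pW qW rW wW] pr /and4P[Ep Eq Er Ew] EX EY albe gabe.
case: (eqVneq w v) => // wv; exfalso.
have := dist2_edge vW pW Ep; have := dist2_edge vW qW Eq; have := dist2_edge vW rW Er.
have := dist2_gt0 pW rW pr; have := dist2_gt0 wW vW wv.
have := dist2_le wW pW; have := dist2_le wW rW; have := dist2_edge qW wW Ew.
rewrite /dist2 => qw wr wp w_gt0 pr_gt0 vr vq vp.
suff : ((X w - X v) - (X q - X v))^2 + ((Y w - Y v) - (Y q - Y v))^2 < D2 by nra.
have [be_lt0|be_gt0] : be < 0 \/ 0 < be.
  by apply: Rdichotomy => be0; rewrite be0 Rmult_0_r in albe; lra.
- apply: (@cone_middle_dist_lt (X p - X v) (Y p - Y v) _ _ (X r - X v) (Y r - Y v)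
    al be ga); nra.
- apply: (@cone_middle_dist_lt (X p - X v) (Y p - Y v) _ _ (X r - X v) (Y r - Y v)
    (- al) (- be) (- ga)); nra.
Qed.

Lemma plane_diameter_leaf : leaf_in_neighbour_triples E W.
Proof.
move=> v a b c [vW aW bW cW] [ab bc ca] /and3P[Ea Eb Ec].
have := dist2_edge vW aW Ea; have := dist2_edge vW bW Eb; have := dist2_edge vW cW Ec.
have := dist2_le aW bW; have := dist2_le bW cW; have := dist2_le cW aW.
have := dist2_gt0 aW bW ab; have := dist2_gt0 bW cW bc; have := dist2_gt0 cW aW ca.
rewrite /dist2.
set A0 := X a - X v; set A1 := Y a - Y v; set B0 := X b - X v; set B1 := Y b - Y v.
set C0 := X c - X v; set C1 := Y c - Y v.
move=> ca_gt0 bc_gt0 ab_gt0 ca_le bc_le ab_le vc vb va.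
have Ha : A0^2 + A1^2 = D2 by rewrite /A0 /A1; nra.
have Hb : B0^2 + B1^2 = D2 by rewrite /B0 /B1; nra.
have Hc : C0^2 + C1^2 = D2 by rewrite /C0 /C1; nra.
(* Two neighbours of v are seen from v under an angle in (0, pi/3]. *)
have AB : 0 < A0*B0 + A1*B1 < D2 by rewrite /A0 /A1 /B0 /B1; split; nra.
have BC : 0 < B0*C0 + B1*C1 < D2 by rewrite /C0 /C1 /B0 /B1; split; nra.
have AC : 0 < A0*C0 + A1*C1 < D2 by rewrite /A0 /A1 /C0 /C1; split; nra.
(* The 2x2 minors give al A + be B + ga C = 0; pairing with A shows that their signs
   are not all equal, and the vector whose coefficient has the odd sign is the middle one. *)
set al := B0*C1 - B1*C0; set be := C0*A1 - C1*A0; set ga := A0*B1 - A1*B0.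
have EX : al * A0 + be * B0 + ga * C0 = 0 by rewrite /al /be /ga; ring.
have EY : al * A1 + be * B1 + ga * C1 = 0 by rewrite /al /be /ga; ring.
have EA : al * D2 + be * (A0*B0 + A1*B1) + ga * (A0*C0 + A1*C1) = 0.
  rewrite -Ha; transitivity (A0 * (al*A0 + be*B0 + ga*C0) + A1 * (al*A1 + be*B1 + ga*C1)).
    by ring.
  by rewrite EX EY; ring.
have al0 : al <> 0 by apply: (cross_neq0 Hb Hc); lra.
have be0 : be <> 0 by rewrite /be => ?; apply: (cross_neq0 Ha Hc); lra.
have ga0 : ga <> 0 by apply: (cross_neq0 Ha Hb); lra.
have D2_gt0 : 0 < D2 by lra.
case: (sign_odd_one_out al0 be0 ga0 D2_gt0 (proj1 AB) (proj1 AC) EA)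
  => [[s1 s2]|[s1 s2]|[s1 s2]].
- exists b; first by rewrite !inE eqxx orbT.
  move=> w wW Ebw; apply: (@middle_neighbour_leaf v a b c w al be ga) => //.
    by rewrite eq_sym.
  by rewrite Ea Eb Ec Ebw.
- exists a; first by rewrite !inE eqxx.
  move=> w wW Eaw; apply: (@middle_neighbour_leaf v b a c w be al ga) => //.
  + by rewrite Ea Eb Ec Eaw.
  + by rewrite -EX /A0 /B0 /C0; ring.
  + by rewrite -EY /A1 /B1 /C1; ring.
- exists c; first by rewrite !inE eqxx !orbT.
  move=> w wW Ecw; apply: (@middle_neighbour_leaf v a c b w al ga be) => //.
  + by rewrite Ea Eb Ec Ecw.
  + by rewrite -EX /A0 /B0 /C0; ring.
  + by rewrite -EY /A1 /B1 /C1; ring.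
Qed.

End PlaneDiameterGraph.

Lemma edist2E (x y : 'I_2 -> R) :
  edist 2 x y = sqrt ((x ord0 - y ord0)^2 + (x ord_max - y ord_max)^2).
Proof.
rewrite /edist RsumE big_enum /= !big_ord_recl big_ord0 /= Rplus_0_r.
by have -> : lift ord0 ord0 = ord_max :> 'I_2 by apply: val_inj.
Qed.

Lemma diameter_graph_card_edges n (g : graphT n) (W : {set 'I_n}) :
  is_diameter_graph 2 n (adj n g) W -> (#|edges_in g W| <= #|W|)%N.
Proof.
case=> f [f_inj [D [diam_le [[x0 [y0 [x0W [y0W D_attained]]]] edge_iff]]]].
pose X x := f x ord0; pose Y x := f x ord_max.
have dist2E x y : (X x - X y)^2 + (Y x - Y y)^2 = edist 2 (f x) (f y) ^ 2.
  by rewrite edist2E pow2_sqrt //; apply: Rplus_le_le_0_compat; apply: pow2_ge_0.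
have dist_ge0 x y : 0 <= edist 2 (f x) (f y) by rewrite edist2E; apply: sqrt_pos.
have leaf : leaf_in_neighbour_triples (adj n g) W.
  apply: (@plane_diameter_leaf _ _ _ X Y (D ^ 2)) => x y xW yW; rewrite dist2E.
  - by apply: pow_incr; split; [apply: dist_ge0 | apply: diam_le].
  - move=> /eqP xy; rewrite -dist2E; apply: Rnot_le_lt => dist_le0.
    have := pow2_ge_0 (X x - X y); have := pow2_ge_0 (Y x - Y y) => sqY sqX.
    have eqX : X x = X y by apply/Rminus_diag_uniq/Rsqr_0_uniq; rewrite /Rsqr; nra.
    have eqY : Y x = Y y by apply/Rminus_diag_uniq/Rsqr_0_uniq; rewrite /Rsqr; nra.
    apply: xy; apply: f_inj => //; apply: functional_extensionality => i.
    have [->|->] : i = ord0 \/ i = ord_max.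
      by case: i => [[|[|//]]] i2; [left|right]; apply: val_inj.
    + exact: eqX.
    + exact: eqY.
  - by move=> Exy; congr (_ ^ 2); apply/edge_iff => // xy; rewrite xy adj_irr in Exy.
have := degsum_le (@adj_sym n g) (@adj_irr n g) leaf (subxx W).
by rewrite degsum_adj leq_pmul2l.
Qed.

(** * The first moment bound *)

Definition pair_prob (p : R) (b : bool) : R := if b then p else 1 - p.

Lemma weightE n p (g : graphT n) : weight n p g = \big[Rmult/R1]_(e : pairT n) pair_prob p (g e).
Proof. by rewrite /weight RprodE big_enum. Qed.

Lemma weight_ge0 n p (g : graphT n) : 0 <= p <= 1 -> 0 <= weight n p g.
Proof.
by move=> p01; rewrite weightE; apply: Rprod_ge0 => e _; rewrite /pair_prob; case: (g e); lra.
Qed.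

Lemma probE n p (A : graphT n -> Prop) : prob n p A =
  \big[Rplus/R0]_(g : graphT n) (if excluded_middle_informative (A g) then weight n p g else 0).
Proof. by rewrite /prob RsumE big_enum. Qed.

(* The edge indicators are independent, so E[t^#(edges in U)] factors over the pairs of U. *)
Lemma expect_pow_card_edges n p (U : {set pairT n}) t :
  \big[Rplus/R0]_(g : graphT n) (weight n p g * t ^ #|[set e in U | g e]|)
  = (p * t + (1 - p)) ^ #|U|.
Proof.
have factor g : weight n p g * t ^ #|[set e in U | g e]| =
    \big[Rmult/R1]_(e : pairT n) (pair_prob p (g e) * (if (e \in U) && g e then t else 1)).
  rewrite weightE -Rprod_const [in X in _ * X]big_mkcond -big_split /=.
  by apply: eq_bigr => e _; rewrite inE.
rewrite (eq_bigr _ (fun g _ => factor g)).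
rewrite -(bigA_distr_bigA (fun e b => pair_prob p b * (if (e \in U) && b then t else 1))) /=.
rewrite -Rprod_const [in RHS]big_mkcond /=; apply: eq_bigr => e _.
by rewrite big_bool /pair_prob /=; case: (e \in U) => /=; lra.
Qed.

(* Markov's inequality for the sum over k-sets W of t^(e(W) - k), which is >= 1 on A. *)
Lemma prob_sparse_set_le n p k (A : graphT n -> Prop) t :
  0 <= p <= 1 -> 0 < t <= 1 ->
  (forall g, A g -> exists W : {set 'I_n}, #|W| = k /\ (#|edges_in g W| <= k)%N) ->
  prob n p A <= INR 'C(n, k) * ((p * t + (1 - p)) ^ 'C(k, 2) / t ^ k).
Proof.
move=> p01 t01 sparse.
have tk_gt0 : 0 < t ^ k by apply: pow_lt; lra.
pose ksets := [set W : {set 'I_n} | #|W| == k].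
pose S g := \big[Rplus/R0]_(W in ksets) (t ^ #|edges_in g W| / t ^ k).
have term_ge0 g W : 0 <= t ^ #|edges_in g W| / t ^ k.
  by apply: Rmult_le_pos; [apply: pow_le; lra | exact/Rlt_le/Rinv_0_lt_compat].
have S_ge0 g : 0 <= S g by apply: Rsum_ge0 => W _; apply: term_ge0.
apply: (Rle_trans _ (\big[Rplus/R0]_(g : graphT n) (weight n p g * S g))).
  rewrite probE; apply: Rle_sum => g _; have w_ge0 := weight_ge0 g p01.
  destruct (excluded_middle_informative (A g)) as [Ag|]; last exact: Rmult_le_pos.
  have [W [cardW sparseW]] := sparse g Ag.
  suff : 1 <= S g by rewrite /=; nra.
  rewrite /S (bigD1 W) /=; last by rewrite inE cardW.
  rewrite -[1]Rplus_0_r; apply: Rplus_le_compat.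
    apply: (Rmult_le_reg_r (t ^ k)) => //.
    rewrite Rmult_1_l /Rdiv Rmult_assoc Rinv_l ?Rmult_1_r; last lra.
    by apply: pow_le1_decr => //; lra.
  by apply: Rsum_ge0 => W' _; apply: term_ge0.
under eq_bigr => g _ do rewrite /S big_distrr /=.
rewrite exchange_big /= (eq_bigr (fun W => (p * t + (1 - p)) ^ 'C(k, 2) / t ^ k)).
  by rewrite Rsum_const card_draws card_ord; apply: Rle_refl.
move=> W; rewrite inE => /eqP cardW.
under eq_bigr => g _ do rewrite /Rdiv -Rmult_assoc.
by rewrite -big_distrl /= expect_pow_card_edges card_pairs_in cardW.
Qed.

(* By induction, using (1 + 1/k)^k <= e. *)
Lemma pow_le_exp_fact k : INR k ^ k <= exp (INR k) * INR k`!.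
Proof.
elim: k => [|[|k] IH]; first by rewrite /= exp_0; lra.
  by rewrite /=; have := exp_ineq1_le 1; lra.
set K := INR k.+1; have K_gt0 : 0 < K by apply: lt_0_INR; apply/leP.
rewrite -/(INR k.+2) S_INR -/K factS INR_muln -/(INR k.+2) S_INR -/K exp_plus.
have -> : (K + 1) ^ k.+2 = (K + 1) * (K ^ k.+1 * (1 + / K) ^ k.+1).
  by rewrite -Rpow_mult_distr Rmult_plus_distr_l Rinv_r ?Rmult_1_r //; lra.
have : K ^ k.+1 * (1 + / K) ^ k.+1 <= exp K * INR k.+1`! * exp 1.
  apply: Rmult_le_compat => //; first by apply: pow_le; lra.
    by apply: pow_le; have := Rinv_0_lt_compat _ K_gt0; lra.
  by have := pow_le_exp k.+1 (Rlt_le _ _ (Rinv_0_lt_compat _ K_gt0)); rewrite -/K Rinv_l; lra.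
have : 0 <= K + 1 by lra.
nra.
Qed.

Lemma binom_mul_pow_le n k : INR 'C(n, k) * INR k ^ k <= (exp 1 * INR n) ^ k.
Proof.
have binom_fact : INR 'C(n, k) * INR k`! <= INR n ^ k.
  rewrite -INR_muln bin_ffact -INR_expn; apply/le_INR/leP.
  rewrite ffact_prod (leq_trans (leq_prod (E2 := fun _ => n) _)) //.
    by move=> i _; apply: leq_subr.
  by rewrite prod_nat_const card_ord.
have C_ge0 := pos_INR 'C(n, k).
rewrite Rpow_mult_distr (pow_exp_ln k (exp_pos 1)) ln_exp Rmult_1_r.
have := pow_le_exp_fact k; have := exp_pos (INR k); nra.
Qed.

Definition tilt (k : nat) (p : R) : R := 2 * (1 - p) / ((INR k - 1) * p).

Lemma first_moment_exp_bound n k p : 0 < p < 1 -> 1 < INR k -> 0 < INR n * p ->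
  INR 'C(n, k) * ((p * tilt k p + (1 - p)) ^ 'C(k, 2) / tilt k p ^ k)
  <= exp (INR k * (ln (INR n * p) - ln 2 + (INR k - 3) / 2 * ln (1 - p) + 2)).
Proof.
rewrite /tilt; set q := 1 - p; set K := INR k => p01 K_gt1 np_gt0.
have q_gt0 : 0 < q by rewrite /q; lra.
have n_gt0 : 0 < INR n by nra.
have bin2K : INR 'C(k, 2) = K * (K - 1) / 2.
  by have := f_equal INR (twice_bin2 k); rewrite plus_INR !INR_muln -/K /=; lra.
set t := 2 * q / ((K - 1) * p).
have t_gt0 : 0 < t by apply: Rdiv_lt_0_compat; nra.
have pq_gt0 : 0 < p / (2 * q) by apply: Rdiv_lt_0_compat; lra.
(* t is chosen so that (p t + q)^C(k,2) costs only a factor e^k over q^C(k,2). *)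
have binom_part : (p * t + q) ^ 'C(k, 2) <= q ^ 'C(k, 2) * exp K.
  have -> : p * t + q = q * (1 + 2 / (K - 1)) by rewrite /t; field; lra.
  rewrite Rpow_mult_distr; apply: Rmult_le_compat_l; first by apply: pow_le; lra.
  apply: Rle_trans (pow_le_exp _ _) _; first by apply: Rlt_le; apply: Rdiv_lt_0_compat; lra.
  by rewrite bin2K; apply: Req_le; congr exp; field; lra.
have tilt_part : / t ^ k <= INR k ^ k * (p / (2 * q)) ^ k.
  rewrite -pow_inv -Rpow_mult_distr; apply: pow_incr; split.
    by apply: Rlt_le; apply: Rinv_0_lt_compat.
  by rewrite /t -/K Rinv_div; move: pq_gt0; rewrite /Rdiv; nra.
apply: (Rle_trans _ ((INR 'C(n, k) * INR k ^ k) * (q ^ 'C(k, 2) * exp K * (p / (2 * q)) ^ k))).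
  have : (p * t + q) ^ 'C(k, 2) * / t ^ k
         <= (q ^ 'C(k, 2) * exp K) * (INR k ^ k * (p / (2 * q)) ^ k).
    apply: Rmult_le_compat => //; first by apply: pow_le; nra.
    by apply: Rlt_le; apply: Rinv_0_lt_compat; apply: pow_lt.
  have := pos_INR 'C(n, k); rewrite /Rdiv; nra.
apply: (Rle_trans _ ((exp 1 * INR n) ^ k * (q ^ 'C(k, 2) * exp K * (p / (2 * q)) ^ k))).
  apply: Rmult_le_compat_r; last exact: binom_mul_pow_le.
  apply: Rmult_le_pos; last by apply: pow_le; lra.
  apply: Rmult_le_pos; first by apply: pow_le; lra.
  exact/Rlt_le/exp_pos.
rewrite (pow_exp_ln k (_ : 0 < exp 1 * INR n)); last by have := exp_pos 1; nra.
rewrite (pow_exp_ln _ q_gt0) (pow_exp_ln k pq_gt0) -!exp_plus; apply: Req_le; congr exp.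
have ln_pq : ln (p / (2 * q)) = ln p - ln 2 - ln q.
  rewrite /Rdiv ln_mult; [|lra|by apply: Rinv_0_lt_compat; lra].
  by rewrite ln_Rinv ?ln_mult; lra.
rewrite bin2K -/K (ln_mult _ _ (exp_pos 1) n_gt0) ln_exp ln_pq.
by rewrite (ln_mult _ _ n_gt0 (proj1 p01)); field.
Qed.

Lemma first_moment_exponent_le (K L q eps : R) :
  0 < eps -> 0 < q < 1 -> 1 <= K -> 1 <= q * L -> 4 + 3 * ln L <= eps * L ->
  (2 + eps) * L < K * ln (1 / q) ->
  K * (L - ln 2 + (K - 3) / 2 * ln q + 2) <= - ln 2.
Proof.
move=> eps_gt0 q01 K_ge1 qL_ge1 lnL_le KlnL.
have ln_inv_q : ln (1 / q) = - ln q by rewrite /Rdiv Rmult_1_l ln_Rinv; lra.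
have ln2_gt0 : 0 < ln 2 by rewrite -ln_1; apply: ln_increasing; lra.
have lnq_ge : - ln L <= ln q.
  have L_gt0 : 0 < L by nra.
  rewrite -ln_Rinv //; apply: ln_le_compat; first exact: Rinv_0_lt_compat.
  by apply: (Rmult_le_reg_r L); rewrite ?Rinv_l; lra.
have : L - ln 2 + (K - 3) / 2 * ln q + 2 < - ln 2.
  rewrite ln_inv_q in KlnL; lra.
nra.
Qed.

Lemma prob_event_le_half n k p eps b :
  0 < eps -> 0 < p < 1 -> 1 < INR n * p ->
  2 <= (1 - p) * ln (INR n * p) ->
  4 + 3 * ln (ln (INR n * p)) <= eps * ln (INR n * p) ->
  (2 + eps) * (ln (INR n * p) / ln (1 / (1 - p))) < INR k ->
  prob n p (event 2 n k b) <= / 2.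
Proof.
move=> eps_gt0 p01 np_gt1 qL lnL_le k_gt.
set q := 1 - p in qL k_gt *; set L := ln (INR n * p) in qL lnL_le k_gt *; set K := INR k in k_gt.
have q01 : 0 < q < 1 by rewrite /q; lra.
have L_gt0 : 0 < L by rewrite /L -ln_1; apply: ln_increasing; lra.
have lnq_gt0 := ln_inv_gt0 q01.
have KlnL : (2 + eps) * L < K * ln (1 / q).
  have -> : (2 + eps) * L = (2 + eps) * (L / ln (1 / q)) * ln (1 / q) by field; lra.
  exact: Rmult_lt_compat_r.
(* Since ln (1/q) <= p/q, k p > (2 + eps) q L >= 4; this makes t <= 1 and k > 4. *)
have Kp_gt4 : 4 < K * p.
  have lnq_le : ln (1 / q) <= p / q.
    apply: Rle_trans (ln_le_sub1 _) _; first by apply: Rdiv_lt_0_compat; lra.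
    by apply: Req_le; rewrite /q; field; lra.
  have : (2 + eps) * L * q < K * p.
    apply: (Rlt_le_trans _ (K * (p / q) * q)); last by apply: Req_le; field; lra.
    apply: Rmult_lt_compat_r; first lra.
    by apply: (Rlt_le_trans _ _ _ KlnL); apply: Rmult_le_compat_l; nra.
  nra.
have K_gt4 : 4 < K by nra.
have t01 : 0 < tilt k p <= 1.
  rewrite /tilt -/q -/K; split; first by apply: Rdiv_lt_0_compat; nra.
  by apply: (Rmult_le_reg_r ((K - 1) * p)); [nra | rewrite /Rdiv Rmult_assoc Rinv_l; nra].
have sparse g : event 2 n k b g -> exists W : {set 'I_n}, #|W| = k /\ (#|edges_in g W| <= k)%N.
  case=> W [cardW [diamW _]]; exists W; split=> //.
  by rewrite -cardW; apply: diameter_graph_card_edges.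
have p01' : 0 <= p <= 1 by lra.
apply: Rle_trans (prob_sparse_set_le p01' t01 sparse) _.
have K_gt1 : 1 < INR k by rewrite -/K; lra.
apply: Rle_trans (first_moment_exp_bound p01 K_gt1 (_ : 0 < INR n * p)) _; first lra.
rewrite -(exp_ln (/ 2)) ?ln_Rinv -/q -/L -/K; try lra.
apply: exp_le_compat; apply: (first_moment_exponent_le eps_gt0 q01); lra.
Qed.

(** * Asymptotics *)

Lemma u_gen_le d n p conn (X : R) : 0 <= X ->
  (forall k, (k <= n)%N -> / 2 < prob n p (event d n k conn) -> INR k <= X) ->
  INR (u_gen d n p conn) <= X.
Proof.
move=> X_ge0 good_le; rewrite /u_gen.
apply: (big_ind (fun m : nat => INR m <= X)) => // [a b a_le b_le|k].
  by rewrite /maxn; case: ifP.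
by rewrite /good; case: Rlt_dec => // half_lt _; apply: good_le (ltnSE (ltn_ord k)) half_lt.
Qed.

Lemma u_gen_le_log n p eps conn :
  0 < eps -> 0 < p < 1 -> 1 < INR n * p ->
  2 <= (1 - p) * ln (INR n * p) ->
  4 + 3 * ln (ln (INR n * p)) <= eps * ln (INR n * p) ->
  INR (u_gen 2 n p conn) <= (2 + eps) * (ln (INR n * p) / ln (1 / (1 - p))).
Proof.
move=> eps_gt0 p01 np_gt1 qL lnL_le.
have L_gt0 : 0 < ln (INR n * p) by rewrite -ln_1; apply: ln_increasing; lra.
have lnq_gt0 : 0 < ln (1 / (1 - p)) by apply: ln_inv_gt0; lra.
apply: u_gen_le => [|k _ half_lt].
  by apply: Rmult_le_pos; [lra | apply: Rlt_le; apply: Rdiv_lt_0_compat].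
apply: Rnot_lt_le => k_gt.
by have := prob_event_le_half conn eps_gt0 p01 np_gt1 qL lnL_le k_gt; lra.
Qed.

Definition log_threshold (eps : R) : R := Rmax 4 (2 / eps * (1 + 3 * Rabs (ln (6 / eps)))).

(* ln L = ln (6/eps) + ln (eps L / 6) <= ln (6/eps) + eps L / 6 - 1. *)
Lemma log_threshold_spec eps L : 0 < eps -> log_threshold eps <= L ->
  4 + 3 * ln L <= eps * L.
Proof.
move=> eps_gt0 L_ge.
have L_ge4 := Rle_trans _ _ _ (Rmax_l _ _) L_ge.
have L_large := Rle_trans _ _ _ (Rmax_r _ _) L_ge.
have eL_gt0 : 0 < eps * L / 6 by apply: Rdiv_lt_0_compat; nra.
have lnL : ln L = ln (6 / eps) + ln (eps * L / 6).
  by rewrite -ln_mult //; [congr ln; field | apply: Rdiv_lt_0_compat]; lra.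
have := ln_le_sub1 eL_gt0; have := Rle_abs (ln (6 / eps)).
have := Rmult_le_compat_r eps _ _ (Rlt_le _ _ eps_gt0) L_large.
have -> : 2 / eps * (1 + 3 * Rabs (ln (6 / eps))) * eps = 2 * (1 + 3 * Rabs (ln (6 / eps))).
  by field; lra.
by rewrite lnL; lra.
Qed.

Lemma u_gen_le_eventually (p : nat -> R) eps :
  (forall n, 0 <= p n <= 1) ->
  cv_infty (fun n => p n * INR n) -> cv_infty (fun n => (1 - p n) * ln (INR n)) ->
  0 < eps ->
  exists n0, forall n, (n0 <= n)%N -> forall conn,
    INR (u_gen 2 n (p n) conn) <= (2 + eps) * (ln (INR n * p n) / ln (1 / (1 - p n))).
Proof.
move=> p01 np_infty qlnn_infty eps_gt0.
have [n1 np_large] := np_infty (exp (log_threshold eps)).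
have [n2 qlnn_large] := qlnn_infty 3.
exists (maxn n1 n2) => n; rewrite geq_max => /andP[/leP n1n /leP n2n] conn.
have := np_large n n1n; have := qlnn_large n n2n; have := p01 n.
move: (p n) => P [p_ge0 p_le1] qlnn np.
have L0_ge4 : 4 <= log_threshold eps by apply: Rmax_l.
have np_gt : exp (log_threshold eps) < INR n * P by lra.
have L_gt : log_threshold eps < ln (INR n * P).
  by rewrite -[X in X < _]ln_exp; apply: ln_increasing => //; apply: exp_pos.
have n_ge0 := pos_INR n.
have np_gt0 : 0 < INR n * P by have := exp_pos (log_threshold eps); lra.
have n_gt0 : 0 < INR n by nra.
have P_gt0 : 0 < P by nra.
have P_lt1 : P < 1 by case: (Rle_lt_or_eq_dec _ _ p_le1) => // P1; rewrite P1 in qlnn; lra.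
have lnn_gt3 : 3 < ln (INR n) by nra.
have ln2_lt1 : ln 2 < 1.
  by rewrite -[X in _ < X]ln_exp; apply: ln_increasing; [lra | have := exp_ineq1 1; lra].
have qL : 2 <= (1 - P) * ln (INR n * P).
  case: (Rlt_le_dec P (/ 2)) => [P_small|P_large].
    have : 0 < (ln (INR n * P) - 4) * (1 - P) by apply: Rmult_lt_0_compat; lra.
    lra.
  have lnP_ge : - ln 2 <= ln P by rewrite -ln_Rinv; [apply: ln_le_compat|]; lra.
  have ln2_gt0 : 0 < ln 2 by rewrite -ln_1; apply: ln_increasing; lra.
  have h1 : 0 <= (1 - P) * (ln P + ln 2) by apply: Rmult_le_pos; lra.
  have h2 : 0 <= P * ln 2 by apply: Rmult_le_pos; lra.
  by rewrite ln_mult //; lra.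
apply: u_gen_le_log; try lra.
  apply: (Rlt_le_trans _ (exp (log_threshold eps))); last lra.
  by have := exp_ineq1_le (log_threshold eps); lra.
by apply: log_threshold_spec; lra.
Qed.

Theorem theorem16 (p : nat -> R)
  (Hp : forall n, Rle 0 (p n) /\ Rle (p n) 1)
  (Hpn : cv_infty (fun n => Rmult (p n) (INR n)))
  (Hqln : cv_infty (fun n => Rmult (Rminus 1 (p n)) (ln (INR n)))) :
  forall eps : R, Rlt 0 eps ->
  exists n0 : nat, forall n : nat, (n0 <= n)%N ->
    Rle (INR (u 2 n (p n)))
        (Rmult (Rplus 2 eps) (Rdiv (ln (Rmult (INR n) (p n))) (ln (Rdiv 1 (Rminus 1 (p n)))))) /\
    Rle (INR (u' 2 n (p n)))
        (Rmult (Rplus 2 eps) (Rdiv (ln (Rmult (INR n) (p n))) (ln (Rdiv 1 (Rminus 1 (p n)))))).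
Proof.
move=> eps eps_gt0.
have [n0 bound] := u_gen_le_eventually Hp Hpn Hqln eps_gt0.
by exists n0 => n n0n; split; apply: bound.
Qed.
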